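(* For an integer $q\ge 3$, let $\mathbf{mGT}_q$ be the subgroup of the group of permutations of the set $\mathbb{Z}/q\mathbb{Z}$ generated by (i) the multiplication maps $a\mapsto da$ for all $d\in(\mathbb{Z}/q\mathbb{Z})^*$, and (ii) the involution $\theta_q: a\mapsto 1-a$. For integers $p,q\ge 3$ with $p$ dividing $q$, let $t_{q,p}:\mathbb{Z}/q\mathbb{Z}\to\mathbb{Z}/p\mathbb{Z}$, $a \bmod q\mapsto a\bmod p$, be the reduction homomorphism. Then for every such $p\mid q$ and every $g\in\mathbf{mGT}_q$ there is a unique permutation $u_{q,p}(g)$ of $\mathbb{Z}/p\mathbb{Z}$ with $t_{q,p}\circ g=u_{q,p}(g)\circ t_{q,p}$; it lies in $\mathbf{mGT}_p$, and $g\mapsto u_{q,p}(g)$ is a group homomorphism $u_{q,p}:\mathbf{mGT}_q\to\mathbf{mGT}_p$. Moreover, whenever $p$ divides $q$ and $r$, and $q$ and $r$ divide $s$ (all $\ge 3$), one has $u_{q,p}\circ u_{s,q}=u_{r,p}\circ u_{s,r}=u_{s,p}$.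
   Context: $(\mathbb{Z}/q\mathbb{Z})^*$ denotes the multiplicative group of residue classes $d\bmod q$ with $\gcd(d,q)=1$. *)

From HB Require Import structures.
From mathcomp Require Import all_boot all_order all_algebra all_fingroup.
Set Implicit Arguments. Unset Strict Implicit. Unset Printing Implicit Defensive.
Import GRing.Theory.

(* Z/qZ is modelled by 'Z_q (only used for q >= 3, so 'Z_q really is Z/qZ). *)

Definition mGT_gens (q : nat) : {set {perm 'Z_q}} :=
  [set s : {perm 'Z_q} |
     [exists d : 'Z_q, (d \is a GRing.unit) && [forall a : 'Z_q, s a == (d * a)%R]]
  || [forall a : 'Z_q, s a == (1 - a)%R]].

Definition mGT (q : nat) : {group {perm 'Z_q}} := (<<mGT_gens q>>)%G.

Definition red (q p : nat) (a : 'Z_q) : 'Z_p := inZp (nat_of_ord a).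

(* u_{q,p}(g): the permutation h of Z/pZ with t o g = h o t (if one exists; 1 otherwise) *)
Definition u (q p : nat) (g : {perm 'Z_q}) : {perm 'Z_p} :=
  odflt 1%g [pick h : {perm 'Z_p} | [forall a : 'Z_q, red p (g a) == h (red p a)]].

(* Since p divides q, reduction Z/qZ -> Z/pZ is a surjective ring morphism.  It
   therefore carries each generator of mGT_q (multiplication by a unit d,
   resp. a |-> 1 - a) to the corresponding generator of mGT_p (multiplication
   by the unit d mod p, resp. b |-> 1 - b), and permutations of Z/qZ which
   descend along the reduction to an element of mGT_p form a group, which thus
   contains mGT_q.  Surjectivity makes the descended permutation unique, and
   uniqueness yields both multiplicativity of u_{q,p} and the compatibility
   u_{q,p} o u_{s,q} = u_{s,p}. *)
From mathcomp Require Import all_boot all_order all_algebra all_fingroup.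
Import GRing.Theory.

Section Reduction.
Local Open Scope ring_scope.
Context {p q : nat}.
Hypotheses (p_gt1 : (1 < p)%N) (q_gt1 : (1 < q)%N) (p_dvd_q : (p %| q)%N).

Lemma redE (a : 'Z_q) : red p a = (a : nat)%:R.
Proof. by rewrite /red Zp_nat. Qed.

Lemma red_natr m : red p (m%:R : 'Z_q) = m%:R.
Proof.
rewrite redE (val_Zp_nat q_gt1) {2}(divn_eq m q) natrD natrM.
have -> : (q%:R : 'Z_p) = 0.
  by case/dvdnP: p_dvd_q => k ->; rewrite natrM pchar_Zp // mulr0.
by rewrite mulr0 add0r.
Qed.

Lemma red1 : red p (1 : 'Z_q) = 1.
Proof. exact: (red_natr 1). Qed.

Lemma redD (a b : 'Z_q) : red p (a + b) = red p a + red p b.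
Proof. by rewrite -(natr_Zp a) -(natr_Zp b) -natrD !red_natr natrD. Qed.

Lemma redM (a b : 'Z_q) : red p (a * b) = red p a * red p b.
Proof. by rewrite -(natr_Zp a) -(natr_Zp b) -natrM !red_natr natrM. Qed.

Lemma red1B (a : 'Z_q) : red p (1 - a) = 1 - red p a.
Proof. by apply/eqP; rewrite eq_sym subr_eq -redD subrK red1. Qed.

Lemma red_unit {d : 'Z_q} : d \is a GRing.unit -> red p d \is a GRing.unit.
Proof.
move=> d_unit; apply/unitrP; exists (red p d^-1).
by rewrite -!redM mulVr ?divrr ?red1.
Qed.

Lemma red_surj (b : 'Z_p) : exists a : 'Z_q, red p a = b.
Proof. by exists (nat_of_ord b)%:R; rewrite red_natr natr_Zp. Qed.

Definition descends (g : {perm 'Z_q}) (h : {perm 'Z_p}) :=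
  forall a, red p (g a) = h (red p a).

Lemma descendsP g h :
  reflect (descends g h) [forall a, red p (g a) == h (red p a)].
Proof. by apply: (iffP forallP) => E a; apply/eqP. Qed.

Lemma descends_uniq {g h1 h2} : descends g h1 -> descends g h2 -> h1 = h2.
Proof.
move=> E1 E2; apply/permP => b; have [a <-] := red_surj b.
by rewrite -E1 -E2.
Qed.

Lemma descends1 : descends 1%g 1%g.
Proof. by move=> a; rewrite !perm1. Qed.

Lemma descendsM {g1 g2 h1 h2} :
  descends g1 h1 -> descends g2 h2 -> descends (g1 * g2)%g (h1 * h2)%g.
Proof. by move=> E1 E2 a; rewrite !permM E2 E1. Qed.

Definition descent_set (H : {set {perm 'Z_p}}) : {set {perm 'Z_q}} :=
  [set g : {perm 'Z_q} |
    [exists h in H, [forall a, red p (g a) == h (red p a)]]].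

Lemma descent_setP (H : {set {perm 'Z_p}}) g :
  reflect (exists2 h, h \in H & descends g h) (g \in descent_set H).
Proof.
rewrite inE; apply: (iffP exists_inP) => -[h hH /descendsP E]; by exists h.
Qed.

Lemma descent_set_group (H : {group {perm 'Z_p}}) : group_set (descent_set H).
Proof.
apply/group_setP; split.
  by apply/descent_setP; exists 1%g; [exact: group1 | exact: descends1].
move=> g1 g2 /descent_setP[h1 H1 E1] /descent_setP[h2 H2 E2].
by apply/descent_setP; exists (h1 * h2)%g; [exact: groupM | exact: descendsM].
Qed.

Lemma mGT_gens_descend : mGT_gens q \subset descent_set (mGT p).
Proof.
apply/subsetP => s; rewrite inE.
case/orP => [/existsP[d /andP[d_unit /forallP Es]] | /forallP Es];
  apply/descent_setP.
- have rd_unit := red_unit d_unit.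
  exists (perm (mulrI rd_unit)).
    apply/mem_gen; rewrite inE; apply/orP; left.
    apply/existsP; exists (red p d); rewrite rd_unit.
    by apply/forallP => b; rewrite permE.
  by move=> a; rewrite permE (eqP (Es a)) redM.
- exists (perm (can_inj (subKr (1 : 'Z_p)))).
    apply/mem_gen; rewrite inE; apply/orP; right.
    by apply/forallP => b; rewrite permE.
  by move=> a; rewrite permE (eqP (Es a)) red1B.
Qed.

Lemma mGT_descends {g} : g \in mGT q -> exists2 h, h \in mGT p & descends g h.
Proof.
move=> g_mGT; apply/descent_setP; move: g g_mGT; apply/subsetP.
by rewrite (gen_subG _ (Group (descent_set_group (mGT p)))) mGT_gens_descend.
Qed.

Lemma u_descends {g h} : descends g h -> descends g (u p g).
Proof.
move=> E; rewrite /u; case: pickP => [h' /descendsP // | /(_ h) /negP[]].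
exact/descendsP.
Qed.

Lemma u_descends_mGT {g} : g \in mGT q -> descends g (u p g) /\ u p g \in mGT p.
Proof.
case/mGT_descends => h h_mGT E.
by rewrite (descends_uniq (u_descends E) E).
Qed.

Lemma uM g1 g2 : g1 \in mGT q -> g2 \in mGT q ->
  u p (g1 * g2)%g = (u p g1 * u p g2)%g.
Proof.
move=> g1_mGT g2_mGT; have [E1 _] := u_descends_mGT g1_mGT.
have [E2 _] := u_descends_mGT g2_mGT.
have [E _] := u_descends_mGT (groupM g1_mGT g2_mGT).
exact: descends_uniq E (descendsM E1 E2).
Qed.

End Reduction.

Lemma red_red {p q s} : 1 < p -> 1 < q -> p %| q ->
  forall a : 'Z_s, red p (red q a) = red p a.
Proof. by move=> p_gt1 q_gt1 p_dvd_q a; rewrite (redE a) red_natr // redE. Qed.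

Lemma u_comp {p q s} : 1 < p -> 1 < q -> 1 < s ->
  p %| q -> q %| s ->
  forall g : {perm 'Z_s}, g \in mGT s -> u p (u q g) = u p g.
Proof.
move=> p_gt1 q_gt1 s_gt1 p_dvd_q q_dvd_s g g_mGT.
have p_dvd_s := dvdn_trans p_dvd_q q_dvd_s.
have [Eq uq_mGT] := u_descends_mGT q_gt1 s_gt1 q_dvd_s g_mGT.
have [Ep _] := u_descends_mGT p_gt1 q_gt1 p_dvd_q uq_mGT.
have [Eps _] := u_descends_mGT p_gt1 s_gt1 p_dvd_s g_mGT.
apply/esym/(descends_uniq p_gt1 s_gt1 p_dvd_s Eps) => a.
by rewrite -(red_red p_gt1 q_gt1 p_dvd_q) Eq Ep red_red.
Qed.

Theorem proposition6p3 :
  (forall p q : nat, 3 <= p -> 3 <= q -> p %| q ->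
     forall g : {perm 'Z_q}, g \in mGT q ->
       (exists! h : {perm 'Z_p}, forall a : 'Z_q, red p (g a) = h (red p a))
       /\ (forall a : 'Z_q, red p (g a) = u p g (red p a))
       /\ u p g \in mGT p)
  /\ (forall p q : nat, 3 <= p -> 3 <= q -> p %| q ->
       forall g1 g2 : {perm 'Z_q}, g1 \in mGT q -> g2 \in mGT q ->
         u p (g1 * g2)%g = (u p g1 * u p g2)%g)
  /\ (forall p q r s : nat, 3 <= p -> 3 <= q -> 3 <= r -> 3 <= s ->
       p %| q -> p %| r -> q %| s -> r %| s ->
       forall g : {perm 'Z_s}, g \in mGT s ->
         u p (u q g) = u p g /\ u p (u r g) = u p g).
Proof.
split; [|split].
- move=> p q /ltnW p_gt1 /ltnW q_gt1 p_dvd_q g g_mGT.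
  have [E u_mGT] := u_descends_mGT p_gt1 q_gt1 p_dvd_q g_mGT.
  split=> //; exists (u p g); split=> // h Eh.
  exact: (descends_uniq p_gt1 q_gt1 p_dvd_q E Eh).
- move=> p q /ltnW p_gt1 /ltnW q_gt1 p_dvd_q.
  exact: (uM p_gt1 q_gt1 p_dvd_q).
- move=> p q r s /ltnW p_gt1 /ltnW q_gt1 /ltnW r_gt1 /ltnW s_gt1.
  by move=> p_dvd_q p_dvd_r q_dvd_s r_dvd_s g g_mGT; split; apply: u_comp.
Qed.
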